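(* Assume that $1 \le t \le r$ and $k \in \mathbb{Z}$. Then we have \begin{equation*} \sum_{s = 0}^r(-1)^s\begin{bmatrix} r \\ s \end{bmatrix} \begin{bmatrix} t + k - s -1 \\ t - 1 \end{bmatrix} \begin{bmatrix} r + k - s \\ r - t \end{bmatrix} = 0. \end{equation*}
   Context: $q$ is an indeterminate, $r \ge 2$ is a fixed integer, $[n] = \frac{q^n - q^{-n}}{q - q^{-1}}$ for $n \in \mathbb{Z}$, $[m]^! = [1][2]\cdots[m]$, and for $n \in \mathbb{Z}$, $m \in \mathbb{N}$, the quantum binomial coefficient is $\begin{bmatrix} n \\ m\end{bmatrix} = \frac{[n][n-1]\cdots[n-m+1]}{[m]^!}$ for $m \ge 1$ and $\begin{bmatrix} n \\ 0\end{bmatrix} = 1$ (so the top entry may be negative). *)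

(* q is an indeterminate: we work in the field of rational
   functions Q(q) = {fraction {poly rat}}, with q the image of 'X. *)
From HB Require Import structures.
From mathcomp Require Import all_boot all_order all_algebra fraction.
Set Implicit Arguments. Unset Strict Implicit. Unset Printing Implicit Defensive.
Import Order.TTheory GRing.Theory Num.Theory.
Local Open Scope ring_scope.

Definition QF : fieldType := {fraction {poly rat}}.
Definition q : QF := tofrac 'X.

Definition qint (n : int) : QF := (q ^ n - q ^ (- n)) / (q - q^-1).

Definition qfact (m : nat) : QF := \prod_(1 <= i < m.+1) qint i%:Z.

Definition qbinom (n : int) (m : nat) : QF :=
  (\prod_(i < m) qint (n - i%:Z)) / qfact m.

(* Let D_r f = sum_(s <= r) (-1)^s [r; s] f s (qdelta r f below).  The
   q-Pascal rule gives D_(r+1) f = D_r g with g s = q^s f s - q^(s-r) f (s+1);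
   for f s = q^(e s) this g is (1 - q^(e-r)) q^((e+1) s), so by induction
   D_(r+1) kills q^(e s) for e = -r, -r+2, ..., r, hence every Laurent
   polynomial in q^s with these exponents.  As a function of s, each [x - s]
   is a combination of q^s and q^-s, so the product of the last two binomials
   of the summand, which has (t - 1) + (r - t) = r - 1 such factors, has
   exponents in -(r-1), ..., r-1 and D_r kills it. *)

From HB Require Import structures.
From mathcomp Require Import all_boot all_order all_algebra fraction ring zify.
Import Order.TTheory GRing.Theory Num.Theory.
Local Open Scope ring_scope.

Lemma q_neq0 : q != 0.
Proof. by rewrite /q tofrac_eq0 polyX_eq0. Qed.

Lemma qpowD (a b : int) : q ^ (a + b) = q ^ a * q ^ b.
Proof. exact/expfzDr/q_neq0. Qed.

Lemma qexpn_neq1 n : (0 < n)%N -> q ^+ n != 1.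
Proof.
move=> n_gt0; rewrite /q -tofracXn -tofrac1 tofrac_eq.
apply: contraTneq n_gt0 => Xn_eq1.
have := congr1 (fun p : {poly rat} => size p) Xn_eq1.
by rewrite size_polyXn size_poly1 => -[->].
Qed.

Lemma qint_neq0 n : (0 < n)%N -> qint n%:Z != 0.
Proof.
have qpow_sub_neq0 m : (0 < m)%N -> q ^ m%:Z - q ^ (- m%:Z) != 0.
  move=> m_gt0; have -> : q ^ m%:Z = q ^ (- m%:Z) * q ^+ (m + m).
    by rewrite exprnP -qpowD PoszD; congr (q ^ _); ring.
  rewrite -{2}[q ^ _]mulr1 -mulrBr mulf_neq0 //; first exact: expfz_neq0 q_neq0.
  by rewrite subr_eq0 qexpn_neq1 // addn_gt0 m_gt0.
move=> n_gt0; rewrite /qint mulf_neq0 ?qpow_sub_neq0 // invr_eq0.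
by have := qpow_sub_neq0 1%N isT; rewrite expr1z exprN1.
Qed.

Lemma qint0 : qint 0 = 0.
Proof. by rewrite /qint oppr0 subrr mul0r. Qed.

(* The quantum analogue of [n + 1] = (m + 1) + (n - m). *)
Lemma qintS_split (m n : int) :
  qint (n + 1) = q ^ (m + 1) * qint (n - m) + q ^ (m - n) * qint (m + 1).
Proof.
rewrite /qint !mulrA -mulrDl; congr (_ * _).
rewrite !mulrBr -!qpowD.
have -> : m + 1 + (n - m) = n + 1 by ring.
have -> : m + 1 + - (n - m) = m - n + (m + 1) by ring.
have -> : m - n + - (m + 1) = - (n + 1) by ring.
by rewrite addrA subrK.
Qed.

Lemma qfactS m : qfact m.+1 = qfact m * qint m.+1%:Z.
Proof. by rewrite /qfact big_nat_recr. Qed.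

Lemma qbinom0 n : qbinom n 0 = 1.
Proof. by rewrite /qbinom big_ord0 /qfact big_geq // divr1. Qed.

Lemma qbinomSr (n : int) m :
  qbinom n m.+1 = qbinom n m * qint (n - m%:Z) / qint m.+1%:Z.
Proof. by rewrite /qbinom big_ord_recr qfactS invfM /=; ring. Qed.

Lemma qbinomSS (n : int) m :
  qbinom (n + 1) m.+1 = qint (n + 1) / qint m.+1%:Z * qbinom n m.
Proof.
rewrite /qbinom big_ord_recl qfactS invfM subr0.
under eq_bigr => i _ do rewrite lift0 intS opprD addrA addrK.
by ring.
Qed.

Lemma qbinom_nat_succ (r : nat) : qbinom r%:Z r.+1 = 0.
Proof. by rewrite qbinomSr subrr qint0 mulr0 mul0r. Qed.

Lemma qbinom_pascal (n : int) m :
  qbinom (n + 1) m.+1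
  = q ^ m.+1%:Z * qbinom n m.+1 + q ^ (m%:Z - n) * qbinom n m.
Proof.
have qint_Sm_neq0 : qint (m%:Z + 1) != 0 by rewrite addrC -intS qint_neq0.
rewrite qbinomSS qbinomSr !intS !(addrC 1) (qintS_split m%:Z).
by rewrite mulrDl mulrDl mulfK //; ring.
Qed.

Definition qdelta (r : nat) (f : nat -> QF) : QF :=
  \sum_(s < r.+1) (-1) ^+ s * qbinom r%:Z s * f s.

Lemma eq_qdelta r {f g : nat -> QF} : f =1 g -> qdelta r f = qdelta r g.
Proof. by move=> fg; apply: eq_bigr => s _; rewrite fg. Qed.

Lemma qdeltaZ r c (f : nat -> QF) :
  qdelta r (fun s => c * f s) = c * qdelta r f.
Proof. by rewrite /qdelta mulr_sumr; apply: eq_bigr => s _; ring. Qed.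

Lemma qdelta_sum r n (F : nat -> nat -> QF) :
  qdelta r (fun s => \sum_(j < n) F j s) = \sum_(j < n) qdelta r (F j).
Proof.
rewrite /qdelta exchange_big; apply: eq_bigr => s _.
by rewrite mulr_sumr.
Qed.

Lemma qdeltaS r (f : nat -> QF) :
  qdelta r.+1 f
  = qdelta r (fun s => q ^ s%:Z * f s - q ^ (s%:Z - r%:Z) * f s.+1).
Proof.
pose g s := (-1) ^+ s * qbinom r%:Z s * q ^ s%:Z * f s.
pose h s := (-1) ^+ s * qbinom r%:Z s * q ^ (s%:Z - r%:Z) * f s.+1.
have g_shift : f 0 + \sum_(s < r.+1) g s.+1 = \sum_(s < r.+1) g s.
  rewrite big_ord_recr /= [in RHS]big_ord_recl /g qbinom_nat_succ qbinom0.
  by rewrite expr0z !mulr0 !mul0r addr0 !mul1r.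
have -> : qdelta r.+1 f = f 0 + \sum_(s < r.+1) (g s.+1 - h s).
  rewrite /qdelta big_ord_recl qbinom0 expr0 !mul1r; congr (_ + _).
  apply: eq_bigr => s _; rewrite lift0 /g /h.
  by rewrite intS addrC qbinom_pascal exprS; ring.
rewrite sumrB addrA g_shift /qdelta -sumrB.
by apply: eq_bigr => s _; rewrite /g /h; ring.
Qed.

Lemma qdelta_qpow r j : (j <= r)%N ->
  qdelta r.+1 (fun s => q ^ ((2 * j%:Z - r%:Z) * s%:Z)) = 0.
Proof.
have step r' e : qdelta r'.+1 (fun s => q ^ (e * s%:Z))
    = (1 - q ^ (e - r'%:Z)) * qdelta r' (fun s => q ^ ((e + 1) * s%:Z)).
  rewrite qdeltaS -qdeltaZ; apply: eq_qdelta => s.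
  by rewrite mulrBl mul1r -!qpowD; congr (q ^ _ - q ^ _); rewrite ?intS; ring.
have top_exponent r' :
    qdelta r'.+1 (fun s => q ^ ((2 * r'%:Z - r'%:Z) * s%:Z)) = 0.
  by rewrite step (_ : _ - _ - _ = 0) ?expr0z ?subrr ?mul0r //; ring.
elim: r j => [|r IH] j; rewrite leq_eqVlt => /predU1P[->|lt_jr] //.
rewrite step (_ : 2 * j%:Z - r.+1%:Z + 1 = 2 * j%:Z - r%:Z) ?IH ?mulr0 //.
by rewrite intS; ring.
Qed.

(* f s is a Laurent polynomial in q^s, with exponents -m, -m + 2, ..., m;
   it is encoded by its coefficient polynomial in q^(2 s). *)
Definition qlaurent (m : nat) (f : nat -> QF) :=
  exists2 p : {poly QF}, (size p <= m.+1)%N &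
    forall s : nat, f s = q ^ (- (m%:Z * s%:Z)) * p.[q ^ (2 * s%:Z)].

Lemma eq_qlaurent {m} {f g : nat -> QF} :
  f =1 g -> qlaurent m f -> qlaurent m g.
Proof. by move=> fg [p size_p fE]; exists p => // s; rewrite -fg. Qed.

Lemma qlaurent_const c : qlaurent 0 (fun=> c).
Proof.
exists c%:P => [|s]; first by rewrite size_polyC leq_b1.
by rewrite hornerC mul0r expr0z mul1r.
Qed.

Lemma qlaurent_qint (x : int) : qlaurent 1 (fun s => qint (x - s%:Z)).
Proof.
pose d := (q - q^-1)^-1.
exists (Poly [:: q ^ x * d; - q ^ (- x) * d]); first exact: size_Poly.
move=> s; rewrite horner_Poly /= /qint mul0r add0r -/d.
have -> : q ^ (x - s%:Z) = q ^ (- (1 * s%:Z)) * q ^ x.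
  by rewrite -qpowD; congr (q ^ _); ring.
have -> : q ^ (- (x - s%:Z)) = q ^ (- (1 * s%:Z)) * (q ^ (- x) * q ^ (2 * s%:Z)).
  by rewrite -!qpowD; congr (q ^ _); ring.
by ring.
Qed.

Lemma qlaurentM {m n} {f g : nat -> QF} :
  qlaurent m f -> qlaurent n g -> qlaurent (m + n) (fun s => f s * g s).
Proof.
move=> [p size_p fE] [p' size_p' gE]; exists (p * p').
  by apply: leq_trans (size_mul_leq _ _) _; lia.
move=> s; rewrite fE gE hornerM.
have -> : - ((m + n)%N%:Z * s%:Z) = - (m%:Z * s%:Z) + - (n%:Z * s%:Z).
  by rewrite PoszD; ring.
by rewrite qpowD; ring.
Qed.

Lemma qlaurent_prod m {F : nat -> nat -> QF} :
  (forall i, qlaurent 1 (F i)) -> qlaurent m (fun s => \prod_(i < m) F i s).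
Proof.
move=> F_lin; elim: m => [|m IH].
  by apply: eq_qlaurent (qlaurent_const 1) => s; rewrite big_ord0.
have := qlaurentM IH (F_lin m); rewrite addn1.
by apply: eq_qlaurent => s; rewrite big_ord_recr.
Qed.

Lemma qlaurent_qbinom (n : int) m : qlaurent m (fun s => qbinom (n - s%:Z) m).
Proof.
have F_lin i : qlaurent 1 (fun s => qint (n - i%:Z - s%:Z)).
  exact: qlaurent_qint.
have := qlaurentM (qlaurent_prod m F_lin) (qlaurent_const (qfact m)^-1).
rewrite addn0; apply: eq_qlaurent => s.
by rewrite /qbinom; congr (_ * _); apply: eq_bigr => i _; congr qint; ring.
Qed.

Lemma qdelta_qlaurent r (f : nat -> QF) : qlaurent r f -> qdelta r.+1 f = 0.
Proof.
move=> [p size_p fE].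
pose monomial j s := p`_j * q ^ ((2 * j%:Z - r%:Z) * s%:Z).
have f_expand s : f s = \sum_(j < r.+1) monomial j s.
  rewrite fE (horner_coef_wide _ size_p) mulr_sumr; apply: eq_bigr => j _.
  by rewrite mulrCA exprnP exprz_exp -qpowD; congr (_ * q ^ _); ring.
rewrite (eq_qdelta r.+1 f_expand) qdelta_sum big1 // => j _.
by rewrite /monomial qdeltaZ qdelta_qpow ?mulr0 // -ltnS.
Qed.

Theorem lemma5p6 (r t : nat) (k : int) :
  (2 <= r)%N -> (1 <= t)%N -> (t <= r)%N ->
  \sum_(s < r.+1)
     (-1) ^+ s * qbinom r%:Z s
       * qbinom (t%:Z + k - s%:Z - 1) t.-1
       * qbinom (r%:Z + k - s%:Z) (r - t)
  = 0.
Proof.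
move=> _ t_gt0 le_tr.
have := qlaurentM (qlaurent_qbinom (t%:Z + k - 1) t.-1)
                  (qlaurent_qbinom (r%:Z + k) (r - t)).
case: r le_tr => [|r] le_tr; first by lia.
rewrite (_ : t.-1 + (r.+1 - t) = r)%N; last by lia.
move/qdelta_qlaurent; apply: etrans; apply: eq_bigr => s _.
by rewrite -mulrA (_ : t%:Z + k - s%:Z - 1 = t%:Z + k - 1 - s%:Z) //; ring.
Qed.
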